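(* Let $L$ be a component of a $T^*$-colored link diagram whose labels lie in $\{\pm i,\pm j,\pm k\}\cup\{\tfrac{1\pm i\pm j\pm k}{2}\}$. For a basepoint $b$ on an arc of $L$, let $n$ be the order of $\chi(b)$ and let $Q'(L,b)\in\mathbb{Z}_n$ be the exponent with $q(L,b)=\chi(b)^{Q'(L,b)}$. Then $Q'(L,b)$ does not depend on the choice of the basepoint $b$ on $L$.
   Context: $T^*=\{\pm1,\pm i,\pm j,\pm k,\tfrac{\pm1\pm i\pm j\pm k}{2}\}$ is the binary tetrahedral group (unit quaternions, all sign combinations). A $T^*$-colored link diagram is an oriented diagram of a tame link $\mathcal L\subset\mathbb{R}^3$ together with a homomorphism $\phi:\pi_1(\mathbb{R}^3\setminus\mathcal L)\to T^*$, in which each arc carries the label $\phi(m_a)$ of its Wirtinger meridian (with respect to a basepoint above the projection plane and the orientation of the arc); $\chi(b)$ denotes the label of the arc containing $b$. All labels on a component are conjugate, and all labels on $L$ have the same order $n$. At each crossing $c$ where a component passes under an over-arc with label $g$, with incoming under-arc label $x$ and outgoing label $x'$, the Wirtinger relation $x'=g^{\varepsilon_c}xg^{-\varepsilon_c}$ holds, $\varepsilon_c\in\{\pm1\}$ determined by the sign of the crossing. Traversing $L$ from $b$ along its orientation, let $c_1,\dots,c_m$ be the successive crossings where $L$ passes under an arc whose label is not $-1$, with over-arc labels $g_1,\dots,g_m$, and set $q(L,b)=g_m^{\varepsilon_{c_m}}\cdots g_1^{\varepsilon_{c_1}}$. For such $\chi(b)$, $q(L,b)$ is a power of $\chi(b)$,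 so $Q'(L,b)$ (the discrete logarithm of $q(L,b)$ to base $\chi(b)$) is a well-defined element of $\mathbb{Z}_n$. *)

From HB Require Import structures.
From mathcomp Require Import all_boot all_order all_algebra.
Set Implicit Arguments. Unset Strict Implicit. Unset Printing Implicit Defensive.
Import Order.TTheory GRing.Theory Num.Theory.
Local Open Scope ring_scope.

(* x = ((re, i), (j, k)) stands for re + i*i + j*j + k*k. *)
Definition quat := ((rat * rat) * (rat * rat))%type.
Definition Qt (a b c d : rat) : quat := ((a, b), (c, d)).
Definition qre (x : quat) := x.1.1.
Definition qim (x : quat) := x.1.2.
Definition qjm (x : quat) := x.2.1.
Definition qkm (x : quat) := x.2.2.

Definition qone : quat := Qt 1 0 0 0.
Definition qmone : quat := Qt (-1) 0 0 0.

Definition qmul (x y : quat) : quat :=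
  let: (a1, b1, c1, d1) := (qre x, qim x, qjm x, qkm x) in
  let: (a2, b2, c2, d2) := (qre y, qim y, qjm y, qkm y) in
  Qt (a1*a2 - b1*b2 - c1*c2 - d1*d2)
     (a1*b2 + b1*a2 + c1*d2 - d1*c2)
     (a1*c2 - b1*d2 + c1*a2 + d1*b2)
     (a1*d2 + b1*c2 - c1*b2 + d1*a2).

Definition qnorm2 (x : quat) : rat :=
  qre x ^+ 2 + qim x ^+ 2 + qjm x ^+ 2 + qkm x ^+ 2.

Definition qinv (x : quat) : quat :=
  let n := qnorm2 x in
  Qt (qre x / n) (- qim x / n) (- qjm x / n) (- qkm x / n).

Definition qpow (x : quat) (k : nat) : quat := iter k (qmul x) qone.

Definition is_pm1 (r : rat) : bool := (r == 1) || (r == -1).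
Definition is_pmhalf (r : rat) : bool := (r == 2^-1) || (r == - 2^-1).

Definition in_Tstar (x : quat) : bool :=
  [|| [&& is_pm1 (qre x), qim x == 0, qjm x == 0 & qkm x == 0],
      [&& qre x == 0, is_pm1 (qim x), qjm x == 0 & qkm x == 0],
      [&& qre x == 0, qim x == 0, is_pm1 (qjm x) & qkm x == 0],
      [&& qre x == 0, qim x == 0, qjm x == 0 & is_pm1 (qkm x)]
    | [&& is_pmhalf (qre x), is_pmhalf (qim x), is_pmhalf (qjm x)
        & is_pmhalf (qkm x)]].

Definition in_labelset (x : quat) : bool :=
  [|| [&& qre x == 0, is_pm1 (qim x), qjm x == 0 & qkm x == 0],
      [&& qre x == 0, qim x == 0, is_pm1 (qjm x) & qkm x == 0],
      [&& qre x == 0, qim x == 0, qjm x == 0 & is_pm1 (qkm x)]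
    | [&& qre x == 2^-1, is_pmhalf (qim x), is_pmhalf (qjm x)
        & is_pmhalf (qkm x)]].

(* order of an element of T* : least k >= 1 with x^k = 1
   (every element of T* has order dividing 24) *)
Definition qorder (x : quat) : nat :=
  (find (fun k => qpow x k.+1 == qone) (iota 0 24)).+1.

(* Arcs of type A, crossings of type C.  At crossing c the over-arc is
   [over c]; the under-strand arrives along arc [uin c] and leaves along
   arc [uout c]; [sgn c] is true iff epsilon_c = +1. *)
Record diagram (A C : finType) := Diagram {
  over : C -> A;
  uin  : C -> A;
  uout : C -> A;
  sgn  : C -> bool
}.

(* Well-formedness: each arc ends at most at one undercrossing and starts
   at most at one undercrossing, and an arc ends at an undercrossing iff it
   starts at one (otherwise it is a closed crossing-free loop component). *)
Definition wf_diagram (A C : finType) (D : diagram A C) : Prop :=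
  [/\ injective (uin D), injective (uout D) &
      forall a : A, [exists c, uin D c == a] = [exists c, uout D c == a]].

(* the undercrossing where arc a ends (None for a crossing-free loop) *)
Definition endc (A C : finType) (D : diagram A C) (a : A) : option C :=
  [pick c | uin D c == a].

Definition nextarc (A C : finType) (D : diagram A C) (a : A) : A :=
  if endc D a is Some c then uout D c else a.

Definition hcross (A C : finType) (D : diagram A C) (col : A -> quat)
  (c : C) : quat :=
  if sgn D c then col (over D c) else qinv (col (over D c)).

(* T*-coloring: labels in T* satisfying the Wirtinger relations
   x' = g^eps x g^{-eps} at every crossing (equivalently, a homomorphism
   from the link group via the Wirtinger presentation). *)
Definition Tstar_coloring (A C : finType) (D : diagram A C)
  (col : A -> quat) : Prop :=
  (forall a, in_Tstar (col a)) /\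
  (forall c, col (uout D c) =
     qmul (qmul (hcross D col c) (col (uin D c))) (qinv (hcross D col c))).

(* q(L,b) for a basepoint b on arc a: traverse the component from a,
   listing successive undercrossings c_1, ..., c_m whose over-arc label is
   not -1, and form g_m^{eps_m} ... g_1^{eps_1}. *)
Definition qLb (A C : finType) (D : diagram A C) (col : A -> quat)
  (a : A) : quat :=
  foldl (fun acc k =>
           match endc D (iter k (nextarc D) a) with
           | Some c => if col (over D c) == qmone then acc
                       else qmul (hcross D col c) acc
           | None => acc
           end)
        qone (iota 0 (order (nextarc D) a)).

(* Q'(L,b) in Z_n, n = order of chi(b), represented by its canonical
   representative in {0, ..., n-1}: the least k < n with q(L,b) = chi(b)^k. *)
Definition Qprime (A C : finType) (D : diagram A C) (col : A -> quat)
  (a : A) : nat :=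
  find (fun k => qLb D col a == qpow (col a) k) (iota 0 (qorder (col a))).

From Pilot Require Import Defs.
From mathcomp Require Import all_boot all_order all_algebra.
From mathcomp Require Import ring.
Import GRing.Theory.

Set Implicit Arguments.
Unset Strict Implicit.
Unset Printing Implicit Defensive.

(* Moving the basepoint from an arc [x] to the next arc [nextarc D x] passes
   one undercrossing, with factor [h] (taken to be 1 if the over-arc is
   labelled -1).  The Wirtinger relation says that the new label is
   [h * chi(x) * h^-1], and the new word q is the old one read cyclically
   from its second factor, which is also [h * q * h^-1].  Conjugation by the
   unit quaternion [h] is a multiplicative bijection, so it preserves the
   order of [chi(x)] and the least [k] with [q = chi(x)^k].  The restriction
   of the labels to the admissible set is only needed for such a [k] to
   exist. *)

Lemma eq_foldl (T R : Type) (f1 f2 : R -> T -> R) z s :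
  (forall acc x, f1 acc x = f2 acc x) -> foldl f1 z s = foldl f2 z s.
Proof. by move=> ef; elim: s z => [|x s IHs] z //=; rewrite ef IHs. Qed.

Lemma traject_iota (T : Type) (f : T -> T) x n :
  traject f x n = [seq iter k f x | k <- iota 0 n].
Proof.
elim: n x => [|n IHn] x //=; rewrite IHn -[1%N]addn0 iotaDl -map_comp.
by congr (_ :: _); apply: eq_map => k /=; rewrite -iterSr.
Qed.

Lemma orbit_rot1 (T : finType) (f : T -> T) x :
  injective f -> orbit f (f x) = rot 1 (orbit f x).
Proof.
move=> injf; rewrite /orbit (order_id_cycle (cycle_orbit injf x)).
rewrite -orderSpred [in RHS]trajectS rot1_cons trajectSr -iterSr.
by rewrite orderSpred iter_order.
Qed.

Local Open Scope ring_scope.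

Section QuaternionAlgebra.

Implicit Types x y z g : quat.

Ltac quat_ring :=
  rewrite /qmul /qinv /qnorm2 /qone /qmone /Qt /qre /qim /qjm /qkm /=;
  congr ((_, _), (_, _)); ring.

Lemma mulqA x y z : qmul x (qmul y z) = qmul (qmul x y) z.
Proof.
by case: x y z => [[? ?] [? ?]] [[? ?] [? ?]] [[? ?] [? ?]]; quat_ring.
Qed.

Lemma mul1q x : qmul qone x = x.
Proof. by case: x => [[? ?] [? ?]]; quat_ring. Qed.

Lemma mulq1 x : qmul x qone = x.
Proof. by case: x => [[? ?] [? ?]]; quat_ring. Qed.

Lemma mulNq x : qmul qmone x = qmul x qmone.
Proof. by case: x => [[? ?] [? ?]]; quat_ring. Qed.

Lemma mulNN : qmul qmone qmone = qone.
Proof. by vm_compute. Qed.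

Lemma qinvN : qinv qmone = qmone.
Proof. by vm_compute. Qed.

Lemma qinv1 : qinv qone = qone.
Proof. by vm_compute. Qed.

Lemma mulqV g : qnorm2 g = 1 -> qmul g (qinv g) = qone.
Proof.
case: g => [[a b] [c d]]; rewrite /qinv /qnorm2 /qre /qim /qjm /qkm /= => g1.
rewrite g1 !divr1 /qmul /qone /Qt /qre /qim /qjm /qkm /=.
by congr ((_, _), (_, _)); rewrite -?g1; ring.
Qed.

Lemma mulVq g : qnorm2 g = 1 -> qmul (qinv g) g = qone.
Proof.
case: g => [[a b] [c d]]; rewrite /qinv /qnorm2 /qre /qim /qjm /qkm /= => g1.
rewrite g1 !divr1 /qmul /qone /Qt /qre /qim /qjm /qkm /=.
by congr ((_, _), (_, _)); rewrite -?g1; ring.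
Qed.

Lemma qnorm2V g : qnorm2 g = 1 -> qnorm2 (qinv g) = 1.
Proof.
case: g => [[a b] [c d]]; rewrite /qinv /qnorm2 /qre /qim /qjm /qkm /= => g1.
by rewrite g1 !divr1 -g1; ring.
Qed.

Lemma qnorm2_Tstar x : in_Tstar x -> qnorm2 x = 1.
Proof.
have sq_pm1 r : is_pm1 r -> r ^+ 2 = 1 by case/orP => /eqP ->.
have sq_pmhalf r : is_pmhalf r -> r ^+ 2 = 4^-1 by case/orP => /eqP ->.
have sq0 r : r == 0 -> r ^+ 2 = 0 by move/eqP ->; rewrite expr0n.
rewrite /qnorm2.
case/orP => [|/orP [|/orP [|/orP []]]] /and4P[].
- by move=> /sq_pm1-> /sq0-> /sq0-> /sq0->; vm_compute.
- by move=> /sq0-> /sq_pm1-> /sq0-> /sq0->; vm_compute.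
- by move=> /sq0-> /sq0-> /sq_pm1-> /sq0->; vm_compute.
- by move=> /sq0-> /sq0-> /sq0-> /sq_pm1->; vm_compute.
- by move=> /sq_pmhalf-> /sq_pmhalf-> /sq_pmhalf-> /sq_pmhalf->; vm_compute.
Qed.

End QuaternionAlgebra.

Definition qconjg g x : quat := qmul (qmul g x) (qinv g).

Lemma qconj1g x : qconjg qone x = x.
Proof. by rewrite /qconjg qinv1 mul1q mulq1. Qed.

Lemma qconjNg x : qconjg qmone x = x.
Proof. by rewrite /qconjg qinvN mulNq -mulqA mulNN mulq1. Qed.

Definition qlog (q x : quat) : nat :=
  find (fun k => q == qpow x k) (iota 0 (qorder x)).

Section UnitConjugation.

Variable g : quat.
Hypothesis g1 : qnorm2 g = 1.

Lemma qconjgM x y : qconjg g (qmul x y) = qmul (qconjg g x) (qconjg g y).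
Proof.
by rewrite /qconjg -!mulqA [qmul (qinv g) (qmul g _)]mulqA mulVq // mul1q.
Qed.

Lemma qconjg1 : qconjg g qone = qone.
Proof. by rewrite /qconjg mulq1 mulqV. Qed.

Lemma qconjgX x k : qconjg g (qpow x k) = qpow (qconjg g x) k.
Proof.
elim: k => [|k IHk]; first exact: qconjg1.
by rewrite /qpow !iterS -!/(qpow _ k) qconjgM IHk.
Qed.

Lemma qconjg_inj : injective (qconjg g).
Proof.
have qconjgK x : qmul (qmul (qinv g) (qconjg g x)) g = x.
  by rewrite /qconjg -!mulqA mulVq // mulq1 mulqA mulVq // mul1q.
by move=> x y exy; rewrite -[x]qconjgK exy qconjgK.
Qed.

Lemma qorder_conjg x : qorder (qconjg g x) = qorder x.
Proof.
suff E : (fun k => qpow (qconjg g x) k.+1 == qone) =1 (fun k => qpow x k.+1 == qone).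
  by rewrite /qorder (eq_find E).
by move=> k; rewrite -qconjgX -(inj_eq qconjg_inj (qpow x k.+1)) qconjg1.
Qed.

Lemma qlog_conjg q x : qlog (qconjg g q) (qconjg g x) = qlog q x.
Proof.
rewrite /qlog qorder_conjg; apply: eq_find => k.
by rewrite -qconjgX (inj_eq qconjg_inj).
Qed.

End UnitConjugation.

Section OrderedProduct.

Variables (I : Type) (h : I -> quat).

Definition qprod (s : seq I) : quat :=
  foldl (fun acc i => qmul (h i) acc) qone s.

Lemma qprod_rcons s i : qprod (rcons s i) = qmul (h i) (qprod s).
Proof. by rewrite /qprod foldl_rcons. Qed.

Lemma qprod_cons i s : qprod (i :: s) = qmul (qprod s) (h i).
Proof.
suff shift z : foldl (fun acc j => qmul (h j) acc) z s = qmul (qprod s) z.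
  by rewrite /qprod /= shift mulq1.
elim: s z => [|j s IHs] z /=; first by rewrite mul1q.
by rewrite /qprod /= !IHs mulq1 mulqA.
Qed.

Lemma qprod_rot1 i s :
  qnorm2 (h i) = 1 -> qprod (rot 1 (i :: s)) = qconjg (h i) (qprod (i :: s)).
Proof.
move=> hi1; rewrite rot1_cons qprod_rcons qprod_cons /qconjg.
by rewrite -!mulqA mulqV // mulq1.
Qed.

End OrderedProduct.

Lemma qprod_map (I J : Type) (h : I -> quat) (f : J -> I) s :
  qprod h (map f s) = qprod (h \o f) s.
Proof. by rewrite /qprod; elim: s qone => [|j s IHs] z //=; rewrite IHs. Qed.

Section ColoredDiagram.

Variables (A C : finType) (D : diagram A C) (col : A -> quat).
Hypotheses (wfD : wf_diagram D) (colD : Tstar_coloring D col).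

Lemma endcP a c : endc D a = Some c -> uin D c = a.
Proof. by rewrite /endc; case: pickP => // c' /eqP <- [<-]. Qed.

Lemma endc_None a : endc D a = None -> forall c, uout D c != a.
Proof.
case: wfD => _ _ ends_starts; rewrite /endc; case: pickP => // no_end _ c.
apply/negP => /eqP out_c.
have : [exists c, uout D c == a] by apply/existsP; exists c; rewrite out_c.
by rewrite -ends_starts => /existsP[c' in_c']; rewrite no_end in in_c'.
Qed.

Lemma nextarc_inj : injective (nextarc D).
Proof.
case: wfD => _ inj_out _ x y; rewrite /nextarc.
case ex: (endc D x) => [cx|]; case ey: (endc D y) => [cy|] exy.
- by rewrite -(endcP ex) -(endcP ey) (inj_out _ _ exy).
- by move: (endc_None ey cx); rewrite exy eqxx.
- by move: (endc_None ex cy); rewrite exy eqxx.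
- by [].
Qed.

Definition undercross_factor (a : A) : quat :=
  if endc D a is Some c then
    if col (Defs.over D c) == qmone then qone else hcross D col c
  else qone.

Lemma qnorm2_hcross c : qnorm2 (hcross D col c) = 1.
Proof.
case: colD => inT _; rewrite /hcross; case: (sgn D c).
- exact: qnorm2_Tstar (inT _).
- exact/qnorm2V/qnorm2_Tstar/inT.
Qed.

Lemma qnorm2_undercross_factor a : qnorm2 (undercross_factor a) = 1.
Proof.
have qnorm2_1 : qnorm2 qone = 1 by vm_compute.
rewrite /undercross_factor; case: (endc D a) => [c|] //.
by case: ifP => _ //; apply: qnorm2_hcross.
Qed.

Lemma col_nextarc a : col (nextarc D a) = qconjg (undercross_factor a) (col a).
Proof.
case: colD => _ wirtinger; rewrite /nextarc /undercross_factor.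
case ea: (endc D a) => [c|]; last by rewrite qconj1g.
rewrite wirtinger (endcP ea); case: ifP => // /eqP over_mone.
have -> : hcross D col c = qmone by rewrite /hcross over_mone qinvN; case: sgn.
by rewrite -/(qconjg _ _) qconjNg qconj1g.
Qed.

Lemma qLbE a : qLb D col a = qprod undercross_factor (orbit (nextarc D) a).
Proof.
rewrite /orbit traject_iota qprod_map /qLb /qprod; apply: eq_foldl => acc k /=.
rewrite /undercross_factor; case: (endc D _) => [c|]; last by rewrite mul1q.
by case: ifP; rewrite ?mul1q.
Qed.

Lemma qLb_nextarc a :
  qLb D col (nextarc D a) = qconjg (undercross_factor a) (qLb D col a).
Proof.
have [s orbit_a] : exists s, orbit (nextarc D) a = a :: s.
  by rewrite /orbit -orderSpred; eexists.
rewrite !qLbE (orbit_rot1 _ nextarc_inj) orbit_a.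
exact/qprod_rot1/qnorm2_undercross_factor.
Qed.

Lemma Qprime_nextarc a : Qprime D col (nextarc D a) = Qprime D col a.
Proof.
rewrite /Qprime -!/(qlog _ _) col_nextarc qLb_nextarc.
exact/qlog_conjg/qnorm2_undercross_factor.
Qed.

End ColoredDiagram.

Theorem mainTheorem3 (A C : finType) (D : diagram A C) (col : A -> quat) :
  wf_diagram D -> Tstar_coloring D col ->
  forall a : A,
  (forall x : A, fconnect (nextarc D) a x -> in_labelset (col x)) ->
  forall b : A, fconnect (nextarc D) a b ->
  Qprime D col a = Qprime D col b.
Proof.
move=> wfD colD a _ b /iter_findex <-.
elim: (findex _ a b) => [|n IHn] //=.
by rewrite (Qprime_nextarc wfD colD).
Qed.
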